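(* Let $\alpha\in[0,1]$, $m\ge1$, $n_1,n_2\ge3$, and let $H_1$ be a graph on $n-n_1-n_2$ vertices. Let $H'=C_{n_1}\cup C_{n_2}\cup H_1$ and $H''=C_{n_1+n_2}\cup H_1$. Then $\lambda_1(A_\alpha(K_m\vee H'))=\lambda_1(A_\alpha(K_m\vee H''))$.
   Context: All graphs are finite, simple and undirected. $A_\alpha(G)=\alpha D(G)+(1-\alpha)A(G)$ with $A(G)$ the adjacency and $D(G)$ the degree matrix; $\lambda_1$ denotes the largest eigenvalue. $C_k$ is the cycle on $k$ vertices, $\cup$ disjoint union, $K_m$ the complete graph, and $\vee$ the join (disjoint union plus all edges between the two vertex sets). *)

From HB Require Import structures.
From mathcomp Require Import all_boot all_order all_algebra.
Set Implicit Arguments. Unset Strict Implicit. Unset Printing Implicit Defensive.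
Import Order.TTheory GRing.Theory Num.Theory.
Local Open Scope ring_scope.

Definition simple_graph (n : nat) (e : rel 'I_n) : Prop :=
  (forall i j, e i j = e j i) /\ (forall i, e i i = false).

(* Cycle C_n on 'I_n : i ~ i+1 (mod n). For n >= 3 this is the n-cycle. *)
Definition cycle_graph (n : nat) : rel 'I_n :=
  fun i j => (val j == (val i).+1 %% n)%N || (val i == (val j).+1 %% n)%N.

Definition complete_graph (m : nat) : rel 'I_m := fun i j => i != j.

(* Disjoint union G1 ∪ G2 on 'I_(a + b): first a vertices are G1, rest G2. *)
Definition union_graph (a b : nat) (e1 : rel 'I_a) (e2 : rel 'I_b) : rel 'I_(a + b) :=
  fun i j => match split i, split j with
             | inl x, inl y => e1 x y
             | inr x, inr y => e2 x y
             | _, _ => false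
             end.

Definition join_graph (a b : nat) (e1 : rel 'I_a) (e2 : rel 'I_b) : rel 'I_(a + b) :=
  fun i j => match split i, split j with
             | inl x, inl y => e1 x y
             | inr x, inr y => e2 x y
             | _, _ => true
             end.

Definition adj_mx (R : pzRingType) (n : nat) (e : rel 'I_n) : 'M[R]_n :=
  \matrix_(i, j) (e i j)%:R.

Definition deg_mx (R : pzRingType) (n : nat) (e : rel 'I_n) : 'M[R]_n :=
  \matrix_(i, j) (if i == j then (\sum_(k < n) (e i k)%:R) else 0).

Definition A_alpha (R : pzRingType) (n : nat) (alpha : R) (e : rel 'I_n) : 'M[R]_n :=
  alpha *: deg_mx R e + (1 - alpha) *: adj_mx R e.

Definition is_lambda1 (R : realFieldType) (n : nat) (M : 'M[R]_n) (x : R) : Prop :=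
  eigenvalue M x /\ (forall y : R, eigenvalue M y -> y <= x).

Arguments cycle_graph n : clear implicits.
Arguments complete_graph m : clear implicits.

(* The vertices of the two cycle parts form a block W of K_m v (U u H1), U in
   {C_{n1} u C_{n2}, C_{n1+n2}}, and the two A_alpha matrices differ only
   inside W x W.  Both U are 2-regular, so in both matrices every column of
   the W x W block sums to B = alpha (m + 2) + 2 (1 - alpha), and every vertex
   outside W sees all of W in the same way.  A test vector shows that each
   lambda_1 exceeds B.  Averaging a top eigenvector over W then keeps it
   nonzero (an eigenvector supported on W has eigenvalue at most B) and keeps
   it an eigenvector; being constant on W, it is an eigenvector of the other
   matrix with the same eigenvalue. *)

From HB Require Import structures.
From mathcomp Require Import all_boot all_order all_algebra.
From mathcomp Require Import ring lra zify.
From mathcomp Require Import sesquilinear spectral.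
From mathcomp.real_closed Require Import complex.
Set Implicit Arguments.
Unset Strict Implicit.
Unset Printing Implicit Defensive.
Import Order.TTheory GRing.Theory Num.Theory.
Local Open Scope ring_scope.

Lemma sum_nat_of_bool (T : finType) (P : pred T) : (\sum_i (P i : nat))%N = #|P|.
Proof.
rewrite -sum1_card [RHS]big_mkcond.
by apply: eq_bigr => i _; rewrite unfold_in; case: (P i).
Qed.

Lemma sum_indicator (R : pzSemiRingType) (T : finType) (P : pred T) :
  \sum_i ((P i)%:R : R) = #|P|%:R.
Proof. by rewrite -natr_sum sum_nat_of_bool. Qed.

Lemma rV_neq0_entry (R : nmodType) n (v : 'rV[R]_n) : v != 0 -> exists i, v 0 i != 0.
Proof. by move=> /matrix0Pn [i0 [j]]; rewrite [i0]ord1; exists j. Qed.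

Lemma mx_sym_entry {R : Type} {n} {M : 'M[R]_n} i j : M^T = M -> M i j = M j i.
Proof. by move=> Msym; rewrite -{1}Msym mxE. Qed.

Section Rayleigh.
Variables (R : rcfType) (n : nat) (M : 'M[R]_n).
Hypotheses (n_gt0 : (0 < n)%N) (Msym : M^T = M).
Local Notation toC := (real_complex R).
Local Open Scope sesquilinear_scope.

Lemma sym_complexification_hermsym : M ^ toC \is hermsymmx.
Proof.
apply: realsym_hermsym; last by apply/mxOverP => i j; rewrite mxE /= complex_real.
apply/is_hermitianmxP; rewrite expr0 scale1r map_mx_id //.
by apply/matrixP => i j; rewrite !mxE (mx_sym_entry _ _ Msym).
Qed.

(* Diagonalize the complexification of [M] with a unitary matrix: its
   eigenvalues are real and the Rayleigh quotient is a convex combination of them. *)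
Lemma sym_eigenvalue_rayleigh_max :
  exists2 l, eigenvalue M l &
    forall u : 'rV_n, (u *m M *m u^T) 0 0 <= l * (u *m u^T) 0 0.
Proof.
pose A := M ^ toC.
have Aherm : A \is hermsymmx := sym_complexification_hermsym.
have dreal := hermitian_spectral_diag_real Aherm.
have hA := orthomx_spectralP (hermitian_normalmx Aherm).
set P := spectralmx A in hA; set d := spectral_diag A in hA dreal.
have Pu : P \is unitarymx by exact: spectral_unitarymx.
rewrite invmx_unitary // in hA.
have PPt : P *m P^t* = 1%:M by apply/unitarymxP.
have PtP : P^t* *m P = 1%:M by apply: mulmx1C.
have dR j : d 0 j = ((complex.Re (d 0 j))%:C)%C.
  by have := mxOverP dreal 0 j; case: (d 0 j) => a b; rewrite complex_real => /eqP ->.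
pose im := Order.arg_max (Ordinal n_gt0) xpredT (fun i => complex.Re (d 0 i)).
have im_max j : complex.Re (d 0 j) <= complex.Re (d 0 im).
  by rewrite /im; case: arg_maxP => // i _ max_i; exact: max_i.
exists (complex.Re (d 0 im)).
  rewrite eigenvalue_root_char -(fmorph_root toC) map_char_poly -/A.
  rewrite -eigenvalue_root_char; apply/eigenvalueP; exists (row im P).
    rewrite -row_mul hA !mulmxA PPt mul1mx.
    by apply/rowP => j; rewrite mul_diag_mx !mxE [in LHS]dR.
  apply: contra_neq (oner_neq0 R[i]) => Pim0.
  by have /rowP/(_ im) := congr1 (row im) PPt; rewrite row_mul Pim0 mul0mx !mxE eqxx.
move=> u; pose uC := u ^ toC; pose w := uC *m P^t*.
have uCt : uC ^t* = u^T ^ toC.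
  by apply/matrixP => i j; rewrite !mxE; exact: conjc_real.
have form : toC ((u *m M *m u^T) 0 0) = (w *m diag_mx d *m w^t*) 0 0.
  transitivity (((u *m M *m u^T) ^ toC) 0 0); first by rewrite [in RHS]mxE.
  rewrite !map_mxM -/uC -uCt.
  by rewrite [M ^ toC]hA /w trmx_mul map_mxM trmxCK !mulmxA.
have norm : toC ((u *m u^T) 0 0) = (w *m w^t*) 0 0.
  transitivity (((u *m u^T) ^ toC) 0 0); first by rewrite [in RHS]mxE.
  rewrite map_mxM -/uC -uCt /w trmx_mul map_mxM trmxCK !mulmxA.
  by rewrite -[uC *m _ *m P]mulmxA PtP mulmx1.
suff : toC ((u *m M *m u^T) 0 0) <= toC (complex.Re (d 0 im)) * toC ((u *m u^T) 0 0).
  by rewrite -rmorphM lecR.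
rewrite form norm !mxE mulr_sumr.
apply: ler_sum => j _; rewrite mul_mx_diag !mxE mulrAC [X in _ <= X]mulrC.
by rewrite ler_wpM2l ?mul_conjC_ge0 // [d 0 j]dR lecR.
Qed.

Lemma sym_lambda1_rayleigh : exists l, is_lambda1 M l /\
  forall u : 'rV_n, (u *m M *m u^T) 0 0 <= l * (u *m u^T) 0 0.
Proof.
have [l el rayleigh] := sym_eigenvalue_rayleigh_max.
exists l; split => //; split => // y /eigenvalueP [v vM /rV_neq0_entry [i vi]].
have vv_gt0 : 0 < (v *m v^T) 0 0.
  rewrite mxE (bigD1 i) //= mxE ltr_pwDl ?sumr_ge0 // => [|j _].
    by rewrite lt_def mulf_neq0 //= -expr2 sqr_ge0.
  by rewrite mxE -expr2 sqr_ge0.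
by have := rayleigh v; rewrite vM -scalemxAl mxE ler_pM2r.
Qed.

End Rayleigh.

Section BlockSwap.
Context {R : rcfType} {N : nat} (W : {set 'I_N}) (B : R).
Implicit Types (M : 'M[R]_N) (x : 'rV[R]_N).

Definition agree_off_block M1 M2 :=
  forall i j, ~~ ((i \in W) && (j \in W)) -> M1 i j = M2 i j.
Definition block_col_sum M := forall j, j \in W -> \sum_(i in W) M i j = B.
Definition block_const_rows M :=
  forall i j j', i \notin W -> j \in W -> j' \in W -> M i j = M i j'.
Definition block_ge0 M := forall i j, i \in W -> j \in W -> 0 <= M i j.

Definition block_average x : 'rV_N :=
  \row_i if i \in W then (\sum_(j in W) x 0 j) / #|W|%:R else x 0 i.

Lemma card_block_neq0 {j} : j \in W -> (#|W|%:R : R) != 0.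
Proof. by move=> jW; rewrite pnatr_eq0 -lt0n; apply/card_gt0P; exists j. Qed.

Lemma mulmx_agree_off_block {M1 M2} (c : R) x :
  agree_off_block M1 M2 -> block_col_sum M1 -> block_col_sum M2 ->
  (forall i, i \in W -> x 0 i = c) -> x *m M1 = x *m M2.
Proof.
move=> M12 col1 col2 xW; apply/rowP => j; rewrite !mxE.
rewrite (bigID (mem W)) [RHS](bigID (mem W)) /=.
congr (_ + _); last by apply: eq_bigr => i iW; rewrite M12 // (negbTE iW).
have [jW|jW] := boolP (j \in W); last first.
  by apply: eq_bigr => i _; rewrite M12 // (negbTE jW) andbF.
rewrite (eq_bigr (fun i => c * M1 i j)) => [|i iW]; last by rewrite xW.
rewrite [RHS](eq_bigr (fun i => c * M2 i j)) => [|i iW]; last by rewrite xW.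
by rewrite -!mulr_sumr col1 // col2.
Qed.

Section Eigenvector.
Variables (M : 'M[R]_N) (x : 'rV[R]_N) (l : R).
Hypotheses (Msym : M^T = M) (Mconst : block_const_rows M) (Mcol : block_col_sum M).
Hypothesis xM : x *m M = l *: x.

Lemma eigen_entry j : \sum_i x 0 i * M i j = l * x 0 j.
Proof. by have /rowP/(_ j) := xM; rewrite !mxE. Qed.

(* If [x] vanished off [W], then at its largest entry the column sums [B]
   over [W] would give [|l| <= B]. *)
Lemma block_average_neq0 : block_ge0 M -> x != 0 -> B < l -> block_average x != 0.
Proof.
move=> Mge0 /rV_neq0_entry [i1 xi1] Bl; apply/negP => /eqP y0.
have xout i : i \notin W -> x 0 i = 0.
  by move=> iW; have /rowP/(_ i) := y0; rewrite !mxE (negbTE iW).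
pose j := Order.arg_max i1 xpredT (fun i => `|x 0 i|).
have j_max i : `|x 0 i| <= `|x 0 j|.
  by rewrite /j; case: arg_maxP => // k _ max_k; exact: max_k.
have xj_gt0 : 0 < `|x 0 j| by apply: lt_le_trans (j_max i1); rewrite normr_gt0.
have jW : j \in W.
  by apply: contraT => /xout xj0; move: xj_gt0; rewrite xj0 normr0 ltxx.
have : `|l| * `|x 0 j| <= B * `|x 0 j|.
  rewrite -normrM -eigen_entry (bigID (mem W)) /= [X in _ + X]big1 => [|i /xout->];
    last by rewrite mul0r.
  rewrite addr0 -(Mcol jW) mulr_suml; apply: le_trans (ler_norm_sum _ _ _) _.
  apply: ler_sum => i iW; rewrite normrM (ger0_norm (Mge0 _ _ iW jW)) mulrC.
  by rewrite ler_wpM2l ?Mge0.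
by rewrite ler_pM2r // => /(le_trans (ler_norm l)); rewrite leNgt Bl.
Qed.

(* For [j] in [W], the part of [(x M)_j] coming from outside [W] does not
   depend on [j]; summing the eigen-equation over [W] identifies it. *)
Lemma block_average_eigen : block_average x *m M = l *: block_average x.
Proof.
have Ms i j : M i j = M j i := mx_sym_entry i j Msym.
set S := \sum_(i in W) x 0 i.
apply/rowP => j; rewrite !mxE.
under eq_bigr do rewrite mxE.
rewrite (bigID (mem W)) /=.
under eq_bigr => i iW do rewrite iW.
under [X in _ + X]eq_bigr => i iW do rewrite (negbTE iW).
have [jW|jW] := boolP (j \in W); last first.
  rewrite -eigen_entry [in RHS](bigID (mem W)) /=; congr (_ + _).
  have [->|[w wW]] := set_0Vmem W; first by rewrite !big_set0.
  under eq_bigr => i iW do rewrite Ms (Mconst jW iW wW).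
  under [RHS]eq_bigr => i iW do rewrite Ms (Mconst jW iW wW).
  by rewrite -!mulr_suml sumr_const -[_ *+ #|W|]mulr_natr mulfK ?(card_block_neq0 wW).
set g := \sum_(i | i \notin W) x 0 i * M i j.
have g_const j' : j' \in W -> \sum_(i | i \notin W) x 0 i * M i j' = g.
  by move=> j'W; apply: eq_bigr => i iW; rewrite (Mconst iW j'W jW).
have sumW : l * S = B * S + #|W|%:R * g.
  rewrite mulr_sumr -(eq_bigr _ (fun j' _ => eigen_entry j')).
  under eq_bigr => j' j'W do rewrite (bigID (mem W)) /= g_const //.
  rewrite big_split /= sumr_const mulr_natl exchange_big /= mulr_sumr.
  congr (_ + _); apply: eq_bigr => i iW.
  rewrite -mulr_sumr mulrC -(Mcol iW); congr (_ * _).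
  by apply: eq_bigr => j' _; rewrite Ms.
rewrite -mulr_sumr Mcol //.
have -> : g = (l * S - B * S) / #|W|%:R.
  by rewrite sumW addrC addKr mulrC mulKf ?(card_block_neq0 jW).
by rewrite -/S; field; exact: card_block_neq0 jW.
Qed.

End Eigenvector.

Lemma agree_off_block_sym {M1 M2} : agree_off_block M1 M2 -> agree_off_block M2 M1.
Proof. by move=> M12 i j ij; rewrite M12. Qed.

Lemma agree_off_block_const_rows {M1 M2} :
  agree_off_block M1 M2 -> block_const_rows M1 -> block_const_rows M2.
Proof.
by move=> M12 M1const i j j' iW jW j'W; rewrite -!M12 ?(negbTE iW) // (M1const i j j').
Qed.

(* Averaging a top eigenvector of [M1] over [W] yields an eigenvector of [M2]. *)
Lemma lambda1_le_block_swap {M1 M2 l1 l2} :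
  M1^T = M1 -> agree_off_block M1 M2 -> block_const_rows M1 ->
  block_col_sum M1 -> block_col_sum M2 -> block_ge0 M1 ->
  is_lambda1 M1 l1 -> is_lambda1 M2 l2 -> B < l1 -> l1 <= l2.
Proof.
move=> M1sym M12 M1const col1 col2 M1ge0 [/eigenvalueP [x xM xn0] _] [_ max2] Bl.
apply: max2; apply/eigenvalueP; exists (block_average x).
  rewrite -(mulmx_agree_off_block (c := (\sum_(j in W) x 0 j) / #|W|%:R) M12) //.
    exact: block_average_eigen.
  by move=> i iW; rewrite mxE iW.
exact: (block_average_neq0 col1 xM M1ge0 xn0 Bl).
Qed.

Section TestVector.
Variables (M : 'M[R]_N) (v0 w0 : 'I_N).
Hypotheses (Msym : M^T = M) (Mconst : block_const_rows M) (Mcol : block_col_sum M).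
Hypotheses (v0W : v0 \notin W) (w0W : w0 \in W).

Definition block_test_vector : 'rV[R]_N := \row_i ((i \in W)%:R + (i == v0)%:R).
Local Notation u := block_test_vector.

Lemma test_vector_norm : (u *m u^T) 0 0 = #|W|%:R + 1.
Proof.
have sq i : u 0 i * u^T i 0 = (i \in W)%:R + (i == v0)%:R.
  rewrite !mxE; case: (eqVneq i v0) => [->|_]; first by rewrite (negbTE v0W) !add0r mulr1.
  by case: (i \in W); rewrite ?addr0 ?mulr1 ?mulr0.
rewrite mxE (eq_bigr _ (fun i _ => sq i)) big_split /= !sum_indicator.
by rewrite card1.
Qed.

Lemma test_vector_mul (F : 'I_N -> R) : \sum_i u 0 i * F i = \sum_(i in W) F i + F v0.
Proof.
under eq_bigr do rewrite mxE mulrDl mulr_natl mulrb mulr_natl mulrb.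
by rewrite big_split /= -!big_mkcond big_pred1_eq.
Qed.

Lemma sum_block_const_row i : i \notin W -> \sum_(j in W) M i j = #|W|%:R * M i w0.
Proof.
move=> iW; rewrite (eq_bigr (fun=> M i w0)) => [|j jW]; last exact: Mconst.
by rewrite sumr_const mulr_natl.
Qed.

Lemma test_vector_form :
  (u *m M *m u^T) 0 0 = B * #|W|%:R + 2 * #|W|%:R * M v0 w0 + M v0 v0.
Proof.
have uM j : (u *m M) 0 j = \sum_(i in W) M i j + M v0 j.
  by rewrite mxE test_vector_mul.
rewrite mxE (eq_bigr (fun j => u 0 j * (u *m M) 0 j)) => [|j _]; last first.
  by rewrite mulrC mxE.
rewrite test_vector_mul uM.
under eq_bigr do rewrite uM.
rewrite big_split /= (eq_bigr (fun=> B)) => [|j jW]; last exact: Mcol.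
rewrite [\sum_(i in W) M i v0](eq_bigr (fun i => M v0 i)) => [|i _]; last first.
  exact: mx_sym_entry.
by rewrite sumr_const sum_block_const_row // -mulr_natr; ring.
Qed.

Lemma block_col_sum_lt_rayleigh l :
  (forall u : 'rV_N, (u *m M *m u^T) 0 0 <= l * (u *m u^T) 0 0) ->
  B < 2 * #|W|%:R * M v0 w0 + M v0 v0 -> B < l.
Proof.
move=> rayleigh BM; have := rayleigh u; rewrite test_vector_form test_vector_norm.
have W1_gt0 : 0 < #|W|%:R + 1 :> R by rewrite ltr_wpDl.
by rewrite -(ltr_pM2r W1_gt0); apply: lt_le_trans; lra.
Qed.

End TestVector.

Lemma lambda1_block_swap M1 M2 v0 w0 :
  M1^T = M1 -> M2^T = M2 -> agree_off_block M1 M2 -> block_const_rows M1 ->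
  block_col_sum M1 -> block_col_sum M2 -> block_ge0 M1 -> block_ge0 M2 ->
  v0 \notin W -> w0 \in W -> B < 2 * #|W|%:R * M1 v0 w0 + M1 v0 v0 ->
  exists l, is_lambda1 M1 l /\ is_lambda1 M2 l.
Proof.
move=> M1sym M2sym M12 M1const col1 col2 M1ge0 M2ge0 v0W w0W BM1.
have M21 := agree_off_block_sym M12.
have M2const := agree_off_block_const_rows M12 M1const.
have N_gt0 : (0 < N)%N by apply: leq_ltn_trans (ltn_ord w0).
have [l1 [l1_top rayleigh1]] := sym_lambda1_rayleigh N_gt0 M1sym.
have [l2 [l2_top rayleigh2]] := sym_lambda1_rayleigh N_gt0 M2sym.
have Bl1 : B < l1 := block_col_sum_lt_rayleigh M1sym M1const col1 v0W w0W rayleigh1 BM1.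
have Bl2 : B < l2.
  apply: (block_col_sum_lt_rayleigh M2sym M2const col2 v0W w0W rayleigh2).
  by rewrite -!M12 ?(negbTE v0W).
exists l1; split => //; suff -> : l1 = l2 by [].
apply/eqP; rewrite eq_le.
by rewrite (lambda1_le_block_swap M1sym M12 M1const col1 col2 M1ge0 l1_top l2_top Bl1)
  (lambda1_le_block_swap M2sym M21 M2const col2 col1 M2ge0 l2_top l1_top Bl2).
Qed.

End BlockSwap.

Definition degree {n} (e : rel 'I_n) (i : 'I_n) : nat := (\sum_j (e i j : nat))%N.

Lemma natr_degree (R : pzSemiRingType) n (e : rel 'I_n) i :
  \sum_j ((e i j)%:R : R) = (degree e i)%:R.
Proof. by rewrite /degree natr_sum. Qed.

Lemma degree_complete m (x : 'I_m) : degree (complete_graph m) x = m.-1.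
Proof.
rewrite /degree sum_nat_of_bool -[in RHS](card_ord m) -(cardC1 x).
by apply: eq_card => y; rewrite !inE eq_sym.
Qed.

Lemma ordS_neq_ord_pred n (i : 'I_n) : (2 < n)%N -> ordS i != ord_pred i.
Proof.
move=> n_gt2; rewrite -(inj_eq (@ordS_inj n)) ord_predK -val_eqE /=.
rewrite -addn1 modnDml -[X in _ != X](modn_small (ltn_ord i)).
have -> : (i.+1 + 1 = i + 2)%N by lia.
by rewrite -[X in (_ != X %% n)%N]addn0 eqn_modDl mod0n modn_small.
Qed.

Lemma cycle_graphE n (i j : 'I_n) : cycle_graph n i j = (j == ordS i) || (j == ord_pred i).
Proof.
rewrite /cycle_graph; congr (_ || _).
by rewrite -[LHS]/(i == ordS j) eq_sym (can2_eq (@ordSK n) (@ord_predK n)).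
Qed.

Lemma degree_cycle n (i : 'I_n) : (2 < n)%N -> degree (cycle_graph n) i = 2%N.
Proof.
move=> n_gt2; rewrite /degree sum_nat_of_bool.
transitivity #|[set ordS i; ord_pred i]|; last by rewrite cards2 ordS_neq_ord_pred.
by apply: eq_card => j; rewrite !inE -cycle_graphE.
Qed.

Lemma union_graph_sym a b (e1 : rel 'I_a) (e2 : rel 'I_b) :
  symmetric e1 -> symmetric e2 -> symmetric (union_graph e1 e2).
Proof. by move=> e1s e2s i j; rewrite /union_graph; case: split; case: split. Qed.

Lemma join_graph_sym a b (e1 : rel 'I_a) (e2 : rel 'I_b) :
  symmetric e1 -> symmetric e2 -> symmetric (join_graph e1 e2).
Proof. by move=> e1s e2s i j; rewrite /join_graph; case: split; case: split. Qed.

Lemma complete_graph_sym m : symmetric (complete_graph m).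
Proof. by move=> i j; rewrite /complete_graph eq_sym. Qed.

Lemma cycle_graph_sym n : symmetric (cycle_graph n).
Proof. by move=> i j; rewrite /cycle_graph orbC. Qed.

Lemma degree_union_lshift a b (e1 : rel 'I_a) (e2 : rel 'I_b) (x : 'I_a) :
  degree (union_graph e1 e2) (lshift b x) = degree e1 x.
Proof.
rewrite /degree big_split_ord /= [X in (_ + X)%N]big1 ?addn0 => [|y _].
  by apply: eq_bigr => y _; rewrite /union_graph !(unsplitK (inl _ _)).
by rewrite /union_graph (unsplitK (inl _ _)) (unsplitK (inr _ _)).
Qed.

Lemma degree_union_rshift a b (e1 : rel 'I_a) (e2 : rel 'I_b) (y : 'I_b) :
  degree (union_graph e1 e2) (rshift a y) = degree e2 y.
Proof.
rewrite /degree big_split_ord /= big1 ?add0n => [|x _].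
  by apply: eq_bigr => x _; rewrite /union_graph !(unsplitK (inr _ _)).
by rewrite /union_graph (unsplitK (inl _ _)) (unsplitK (inr _ _)).
Qed.

Lemma union_graph_regular a b (e1 : rel 'I_a) (e2 : rel 'I_b) r :
  (forall x, degree e1 x = r) -> (forall y, degree e2 y = r) ->
  forall i, degree (union_graph e1 e2) i = r.
Proof.
move=> e1reg e2reg i; case: (split_ordP i) => [x ->|y ->].
  by rewrite degree_union_lshift.
by rewrite degree_union_rshift.
Qed.

Section AlphaMatrix.
Variables (R : realFieldType) (alpha : R) (n : nat) (e : rel 'I_n).

Lemma A_alphaE i j : A_alpha alpha e i j =
  alpha * (if i == j then (degree e i)%:R else 0) + (1 - alpha) * (e i j)%:R.
Proof. by rewrite !mxE natr_degree. Qed.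

Lemma A_alpha_sym : symmetric e -> (A_alpha alpha e)^T = A_alpha alpha e.
Proof.
move=> es; apply/matrixP => i j; rewrite mxE !A_alphaE es eq_sym.
by case: eqVneq => // ->.
Qed.

Lemma A_alpha_ge0 i j : 0 <= alpha -> alpha <= 1 -> 0 <= A_alpha alpha e i j.
Proof.
move=> a0 a1; rewrite A_alphaE addr_ge0 ?mulr_ge0 ?subr_ge0 //.
by case: eqP.
Qed.

End AlphaMatrix.

Lemma join_regular_gap (R : realFieldType) (alpha : R) (m p k r : nat) :
  0 <= alpha -> alpha <= 1 -> (0 < m)%N -> (r.+2 <= p)%N ->
  alpha * (m + r)%:R + (1 - alpha) * r%:R <
  2 * p%:R * (1 - alpha) + alpha * (m.-1 + (p + k))%:R.
Proof.
move=> a0 a1; case: m => // m _ rp.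
have [d ->] : exists d, p = (r + 2 + d)%N by exists (p - (r + 2))%N; lia.
rewrite /= -[m.+1]addn1 !natrD.
have d0 : 0 <= d%:R :> R by [].
have r0 : 0 <= r%:R :> R by [].
have k0 : 0 <= k%:R :> R by [].
have m0 : 0 <= m%:R :> R by [].
nra.
Qed.

Section JoinUnion.
Variables (m p k : nat) (H : rel 'I_k).
Implicit Type U : rel 'I_p.
Local Notation G U := (join_graph (complete_graph m) (union_graph U H)).
Local Notation K x := (@lshift m (p + k) x).
Local Notation C c := (@rshift m (p + k) (@lshift p k c)).
Local Notation V h := (@rshift m (p + k) (@rshift p k h)).

Variant join_union_vertex : 'I_(m + (p + k)) -> Type :=
  | VertexK x : join_union_vertex (K x)
  | VertexC c : join_union_vertex (C c)
  | VertexV h : join_union_vertex (V h).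

Lemma join_union_vertexP i : join_union_vertex i.
Proof.
case: (split_ordP i) => [x ->|y ->]; first exact: VertexK.
by case: (split_ordP y) => [c ->|h ->]; [exact: VertexC | exact: VertexV].
Qed.

Lemma edgeKK {U} x y : G U (K x) (K y) = (x != y).
Proof. by rewrite /join_graph !(unsplitK (inl _ _)). Qed.
Lemma edgeKC {U} x c : G U (K x) (C c).
Proof. by rewrite /join_graph (unsplitK (inl _ _)) (unsplitK (inr _ _)). Qed.
Lemma edgeCK {U} x c : G U (C c) (K x).
Proof. by rewrite /join_graph (unsplitK (inl _ _)) (unsplitK (inr _ _)). Qed.
Lemma edgeKV {U} x h : G U (K x) (V h).
Proof. by rewrite /join_graph (unsplitK (inl _ _)) (unsplitK (inr _ _)). Qed.
Lemma edgeVK {U} x h : G U (V h) (K x).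
Proof. by rewrite /join_graph (unsplitK (inl _ _)) (unsplitK (inr _ _)). Qed.
Lemma edgeCC {U} c c' : G U (C c) (C c') = U c c'.
Proof. by rewrite /join_graph /union_graph !(unsplitK (inr _ _)) !(unsplitK (inl _ _)). Qed.
Lemma edgeCV {U} c h : G U (C c) (V h) = false.
Proof. by rewrite /join_graph /union_graph !(unsplitK (inr _ _)) (unsplitK (inl _ _)). Qed.
Lemma edgeVC {U} c h : G U (V h) (C c) = false.
Proof. by rewrite /join_graph /union_graph !(unsplitK (inr _ _)) (unsplitK (inl _ _)). Qed.
Lemma edgeVV {U} h h' : G U (V h) (V h') = H h h'.
Proof. by rewrite /join_graph /union_graph !(unsplitK (inr _ _)). Qed.

Definition edgeE :=
  (@edgeKK, @edgeKC, @edgeCK, @edgeKV, @edgeVK, @edgeCC, @edgeCV, @edgeVC, @edgeVV).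

Definition Ublock : {set 'I_(m + (p + k))} :=
  [set i : 'I_(m + (p + k)) | (m <= i < m + p)%N].

Lemma K_notin_Ublock x : K x \notin Ublock.
Proof. by rewrite inE /=; have := ltn_ord x; lia. Qed.
Lemma C_in_Ublock c : C c \in Ublock.
Proof. by rewrite inE /=; have := ltn_ord c; lia. Qed.
Lemma V_notin_Ublock h : V h \notin Ublock.
Proof. by rewrite inE /=; lia. Qed.

Lemma big_join_union (T : Type) (idx : T) (op : Monoid.law idx) F :
  \big[op/idx]_i F i =
  op (\big[op/idx]_x F (K x)) (op (\big[op/idx]_c F (C c)) (\big[op/idx]_h F (V h))).
Proof. by rewrite big_split_ord /= big_split_ord. Qed.

Lemma UblockP {i} : i \in Ublock -> exists c, i = C c.
Proof.
case: (join_union_vertexP i) => [x|c|h]; last 2 first.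
- by exists c.
- by rewrite (negbTE (V_notin_Ublock h)).
by rewrite (negbTE (K_notin_Ublock x)).
Qed.

Lemma big_Ublock (T : Type) (idx : T) (op : Monoid.com_law idx) F :
  \big[op/idx]_(i in Ublock) F i = \big[op/idx]_c F (C c).
Proof.
rewrite big_mkcond big_join_union big1 => [|x _]; last first.
  by rewrite (negbTE (K_notin_Ublock x)).
rewrite Monoid.mul1m [X in op _ X = _]big1 => [|h _]; last first.
  by rewrite (negbTE (V_notin_Ublock h)).
by rewrite Monoid.mulm1; apply: eq_bigr => c _; rewrite C_in_Ublock.
Qed.

Lemma card_Ublock : #|Ublock| = p.
Proof. by rewrite -sum1_card big_Ublock sum1_card card_ord. Qed.

Lemma degreeK U x : degree (G U) (K x) = (m.-1 + (p + k))%N.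
Proof.
rewrite /degree big_join_union /=.
under eq_bigr do rewrite edgeKK.
under [X in (_ + (X + _))%N]eq_bigr do rewrite edgeKC.
under [X in (_ + (_ + X))%N]eq_bigr do rewrite edgeKV.
rewrite -[X in (X + _)%N]/(degree (complete_graph m) x) degree_complete.
by rewrite !sum1_card !card_ord.
Qed.

Lemma degreeC U c : degree (G U) (C c) = (m + degree U c)%N.
Proof.
rewrite /degree big_join_union /=.
under eq_bigr do rewrite edgeCK.
under [X in (_ + (X + _))%N]eq_bigr do rewrite edgeCC.
under [X in (_ + (_ + X))%N]eq_bigr do rewrite edgeCV.
by rewrite sum1_card card_ord [X in (_ + (_ + X))%N]big1 ?addn0.
Qed.

Lemma edge_off_Ublock U1 U2 i j :
  ~~ ((i \in Ublock) && (j \in Ublock)) -> G U1 i j = G U2 i j.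
Proof.
case: (join_union_vertexP i) => [x|c|h]; case: (join_union_vertexP j) => [y|c'|h'];
  by rewrite ?C_in_Ublock // !edgeE.
Qed.

Lemma edge_to_Ublock U i c c' : i \notin Ublock -> G U i (C c) = G U i (C c').
Proof. by case: (join_union_vertexP i) => [x|c0|h]; rewrite ?C_in_Ublock // !edgeE. Qed.

Section AlphaSpectrum.
Variables (R : rcfType) (alpha : R).

Lemma A_alpha_agree_off_Ublock U1 U2 :
  agree_off_block Ublock (A_alpha alpha (G U1)) (A_alpha alpha (G U2)).
Proof.
move=> i j ij; rewrite !A_alphaE (edge_off_Ublock U1 U2) //; case: eqVneq => // eij.
congr (_ * _%:R + _); rewrite /degree; apply: eq_bigr => l _.
by rewrite (edge_off_Ublock U1 U2) //; move: ij; rewrite eij andbb => /negbTE ->.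
Qed.

Lemma A_alpha_const_rows U : block_const_rows Ublock (A_alpha alpha (G U)).
Proof.
move=> i j j' iW jW j'W; rewrite !A_alphaE.
have [eij|_] := eqVneq i j; first by move: iW; rewrite eij jW.
have [eij'|_] := eqVneq i j'; first by move: iW; rewrite eij' j'W.
rewrite !mulr0; have [c ->] := UblockP jW; have [c' ->] := UblockP j'W.
by rewrite (edge_to_Ublock _ c c' iW).
Qed.

Lemma A_alpha_col_sum U r : symmetric U -> (forall c, degree U c = r) ->
  block_col_sum Ublock (alpha * (m + r)%:R + (1 - alpha) * r%:R) (A_alpha alpha (G U)).
Proof.
move=> Usym Ureg _ /UblockP [c ->].
rewrite big_Ublock /=; under eq_bigr do rewrite A_alphaE.
rewrite big_split /= -!mulr_sumr (bigD1 c) //= eqxx degreeC Ureg.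
rewrite big1 => [|c' /negbTE c'c]; last by rewrite eq_rshift eq_lshift c'c.
rewrite addr0 -(Ureg c) -natr_degree; congr (_ + _ * _); apply: eq_bigr => c' _.
by rewrite edgeCC Usym.
Qed.

Lemma A_alpha_Ublock_ge0 U : 0 <= alpha -> alpha <= 1 ->
  block_ge0 Ublock (A_alpha alpha (G U)).
Proof. by move=> a0 a1 i j _ _; exact: A_alpha_ge0. Qed.

Lemma lambda1_join_regular_union U1 U2 r :
  0 <= alpha -> alpha <= 1 -> (0 < m)%N -> (r.+2 <= p)%N ->
  symmetric U1 -> symmetric U2 -> symmetric H ->
  (forall c, degree U1 c = r) -> (forall c, degree U2 c = r) ->
  exists l, is_lambda1 (A_alpha alpha (G U1)) l /\ is_lambda1 (A_alpha alpha (G U2)) l.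
Proof.
move=> a0 a1 m_gt0 rp U1sym U2sym Hsym U1reg U2reg.
have p_gt0 : (0 < p)%N by lia.
have Gsym U : symmetric U -> symmetric (G U).
  by move=> Usym; exact: join_graph_sym (@complete_graph_sym m) (union_graph_sym Usym Hsym).
pose x0 := Ordinal m_gt0; pose c0 := Ordinal p_gt0.
apply: (@lambda1_block_swap _ _ Ublock _ _ _ (K x0) (C c0)).
- exact/A_alpha_sym/Gsym.
- exact/A_alpha_sym/Gsym.
- exact: A_alpha_agree_off_Ublock.
- exact: A_alpha_const_rows.
- exact: A_alpha_col_sum U1sym U1reg.
- exact: A_alpha_col_sum U2sym U2reg.
- exact: A_alpha_Ublock_ge0.
- exact: A_alpha_Ublock_ge0.
- exact: K_notin_Ublock.
- exact: C_in_Ublock.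
rewrite card_Ublock !A_alphaE eq_lrshift eqxx edgeKC edgeKK eqxx degreeK.
by rewrite mulr0 add0r mulr1 mulr0 addr0 join_regular_gap.
Qed.

End AlphaSpectrum.
End JoinUnion.

Theorem mainTheorem17 (R : rcfType) (alpha : R) (m n1 n2 k : nat)
    (H1 : rel 'I_k) :
  0 <= alpha -> alpha <= 1 ->
  (1 <= m)%N -> (3 <= n1)%N -> (3 <= n2)%N ->
  simple_graph H1 ->
  let H' := union_graph (union_graph (cycle_graph n1) (cycle_graph n2)) H1 in
  let H'' := union_graph (cycle_graph (n1 + n2)) H1 in
  exists lam : R,
    is_lambda1 (A_alpha alpha (join_graph (complete_graph m) H')) lam /\
    is_lambda1 (A_alpha alpha (join_graph (complete_graph m) H'')) lam.
Proof.
move=> a0 a1 m_gt0 n1_ge3 n2_ge3 [H1sym _] H' H''.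
have cycles_sym := union_graph_sym (@cycle_graph_sym n1) (@cycle_graph_sym n2).
have cycles_reg : forall i, degree (union_graph (cycle_graph n1) (cycle_graph n2)) i = 2%N.
  by apply: union_graph_regular => i; exact: degree_cycle.
have cycle_reg (i : 'I_(n1 + n2)) : degree (cycle_graph (n1 + n2)) i = 2%N.
  by apply: degree_cycle; lia.
apply: (lambda1_join_regular_union a0 a1 m_gt0 _ cycles_sym (@cycle_graph_sym _) H1sym
  cycles_reg cycle_reg).
by lia.
Qed.
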